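(* Let the bat graph be the graph obtained from an induced cycle $C_4$ on vertices $u_1,u_2,u_3,u_4$ and four vertex-disjoint copies of $K_{2,4}$ by identifying, for each $i$, one vertex of the part of size $4$ of the $i$-th copy with $u_i$. In every $B_1$-EPG representation of the bat graph, the $C_4$ on $u_1,u_2,u_3,u_4$ is represented by a square-frame.
   Context: A grid is the set of integer points of the plane; a grid edge joins two grid points at distance $1$. A path in the grid is a sequence of distinct grid edges in which consecutive edges share exactly one grid point and non-consecutive edges share none; a bend is a pair of consecutive edges with different directions (horizontal/vertical), and the bend point is their common grid point. An EPG representation of $G$ is a family $(P_v)_{v\in V(G)}$ of grid paths such that distinct $u,v$ are adjacent iff $P_u,P_v$ share a grid edge; it is $B_1$-EPG if every path has at most one bend. A one-bend path has shape $\llcorner$, $\lrcorner$, $\ulcorner$ or $\urcorner$ according to which two directions leave its bend point ($\llcorner$: up and right; $\lrcorner$: up and left; $\ulcorner$: down and right; $\urcorner$: down and left). A frame is a set of four paths $P_1,\dots,P_4$, each with its bend at a different corner of an axis-parallel rectangle, such that $P_1\cap P_2$, $P_1\cap P_3$, $P_2\cap P_4$, $P_3\cap P_4$ each contain at least one grid edge, while $P_1\cap P_4$ and $P_2\cap P_3$ contain no grid edge. A square-frame is a frame on a rectangle with corners $(x_1,y_1),(x_2,y_1),(x_1,y_2),(x_2,y_2)$, $x_1<x_2$, $y_1<y_2$, in which $P_1,P_2,P_3,P_4$ have bend points $(x_1,y_1),(x_2,y_1),(x_1,y_2),(x_2,y_2)$ and shapes $\llcorner,\lrcorner,\ulcorner,\urcorner$,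 respectively. *)

From Stdlib Require Import ZArith List.
Import ListNotations.
Open Scope Z_scope.

Definition point : Type := (Z * Z)%type.

(** A grid edge is represented canonically by its lower/left endpoint
    [(gx, gy)] and its orientation: if [horiz] it joins (gx,gy)-(gx+1,gy),
    otherwise it joins (gx,gy)-(gx,gy+1). *)
Record gedge := GE { gx : Z; gy : Z; horiz : bool }.

Definition src (e : gedge) : point := (gx e, gy e).
Definition tgt (e : gedge) : point :=
  if horiz e then (gx e + 1, gy e) else (gx e, gy e + 1).

Definition on_edge (p : point) (e : gedge) : Prop := p = src e \/ p = tgt e.

Definition dummy_edge : gedge := GE 0 0 true.
Definition edge_at (s : list gedge) (i : nat) : gedge := nth i s dummy_edge.

Definition is_path (s : list gedge) : Prop :=
  NoDup s /\
  (forall i : nat, (S i < length s)%nat ->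
     exists! p : point, on_edge p (edge_at s i) /\ on_edge p (edge_at s (S i))) /\
  (forall i j : nat, (S i < j)%nat -> (j < length s)%nat ->
     forall p : point, ~ (on_edge p (edge_at s i) /\ on_edge p (edge_at s j))).

Definition is_bend (s : list gedge) (i : nat) : Prop :=
  (S i < length s)%nat /\ horiz (edge_at s i) <> horiz (edge_at s (S i)).

Definition at_most_one_bend (s : list gedge) : Prop :=
  forall i j, is_bend s i -> is_bend s j -> i = j.

Inductive dir := Up | Down | Left | Right.

Definition leave (p : point) (d : dir) : gedge :=
  match d with
  | Up => GE (fst p) (snd p) false
  | Right => GE (fst p) (snd p) true
  | Down => GE (fst p) (snd p - 1) false
  | Left => GE (fst p - 1) (snd p) true
  end.

(** Shapes:
    llcorner = (Up, Right), lrcorner = (Up, Left),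
    ulcorner = (Down, Right), urcorner = (Down, Left). *)
Definition bend_with_shape (s : list gedge) (p : point) (d1 d2 : dir) : Prop :=
  exists i : nat, is_bend s i /\
    ((edge_at s i = leave p d1 /\ edge_at s (S i) = leave p d2) \/
     (edge_at s i = leave p d2 /\ edge_at s (S i) = leave p d1)).

Definition share_edge (s t : list gedge) : Prop :=
  exists e, In e s /\ In e t.

Definition square_frame (P1 P2 P3 P4 : list gedge) : Prop :=
  exists x1 x2 y1 y2 : Z, x1 < x2 /\ y1 < y2 /\
    bend_with_shape P1 (x1, y1) Up Right /\
    bend_with_shape P2 (x2, y1) Up Left /\
    bend_with_shape P3 (x1, y2) Down Right /\
    bend_with_shape P4 (x2, y2) Down Left /\
    share_edge P1 P2 /\ share_edge P1 P3 /\ share_edge P2 P4 /\ share_edge P3 P4 /\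
    ~ share_edge P1 P4 /\ ~ share_edge P2 P3.

Inductive idx4 := I1 | I2 | I3 | I4.
Inductive idx3 := J1 | J2 | J3.

Definition next4 (i : idx4) : idx4 :=
  match i with I1 => I2 | I2 => I3 | I3 => I4 | I4 => I1 end.

(** Vertices: [U i] = u_i on the C4; [A i b] = the two vertices of the part of
    size 2 of the i-th K_{2,4}; [B i k] = the three vertices of the part of
    size 4 of the i-th K_{2,4} other than u_i. *)
Inductive batV :=
| U (i : idx4)
| A (i : idx4) (b : bool)
| B (i : idx4) (k : idx3).

Definition bat_adj (v w : batV) : Prop :=
  match v, w with
  | U i, U j => next4 i = j \/ next4 j = i
  | U i, A j _ => i = j
  | A i _, U j => i = j
  | A i _, B j _ => i = j
  | B i _, A j _ => i = j
  | _, _ => False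
  end.

Definition B1_EPG_rep_bat (P : batV -> list gedge) : Prop :=
  (forall v, is_path (P v) /\ at_most_one_bend (P v)) /\
  (forall v w, v <> w -> (bat_adj v w <-> share_edge (P v) (P w))).

(* A grid path with at most one bend is an L-shape: a horizontal and a vertical segment
   meeting at a corner, either of which may be empty.  Two such paths share a grid edge iff
   two collinear segments of them overlap.

   In the gadget K_{2,4} at u_i, the two non-adjacent paths A1, A2 are met by four pairwise
   edge-disjoint paths.  Classifying how each of these meets A1 and A2 (horizontally or
   vertically) shows that the path of u_i meets them in different directions and that another
   of the four meets them in the same way; the two then have the same corner and opposite arms,
   so the path of u_i is bent and the four grid edges at its corner lie in A1 or A2.  Since
   u_j (j <> i) is not adjacent to A1, A2, its path avoids these four edges.

   Two bent L-shapes that share an edge but avoid each other's corner edges share it between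
   their corners, with arms pointing towards each other.  Hence no path of the C4 meets both
   its neighbours in the same direction, the overlaps around the cycle alternate between
   horizontal and vertical, and the four corners form a rectangle with all arms pointing
   inwards: a square-frame. *)

From Stdlib Require Import ZArith List Lia Setoid.
Import ListNotations.
Open Scope Z_scope.

(** * One-bend paths are L-shapes *)

Lemma gedge_eq_iff e f : e = f <-> gx e = gx f /\ gy e = gy f /\ horiz e = horiz f.
Proof.
  destruct e, f; cbn; split; [intros H; injection H as -> -> ->; auto|].
  intros (-> & -> & ->); reflexivity.
Qed.

Lemma on_edge_iff p e : on_edge p e <->
  if horiz e then snd p = gy e /\ (fst p = gx e \/ fst p = gx e + 1)
  else fst p = gx e /\ (snd p = gy e \/ snd p = gy e + 1).
Proof.
  destruct p as [u v], e as [x y []];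
    unfold on_edge, src, tgt; cbn; rewrite !(@pair_equal_spec Z Z); lia.
Qed.

Lemma on_edge_leave p d : on_edge p (leave p d).
Proof. rewrite on_edge_iff; destruct p as [x y], d; cbn; lia. Qed.

(* The corner is (cx, cy); the horizontal arm consists of the grid edges of
   row cy between xlo and xhi, the vertical arm of those of column cx between
   ylo and yhi.  Either arm may be empty. *)
Record ell := Ell { cx : Z; cy : Z; xlo : Z; xhi : Z; ylo : Z; yhi : Z }.

Definition corner (L : ell) : point := (cx L, cy L).

Definition ell_wf (L : ell) : Prop :=
  xlo L <= xhi L /\ ylo L <= yhi L /\
  (cx L = xlo L \/ cx L = xhi L) /\ (cy L = ylo L \/ cy L = yhi L).

Definition ell_edge (L : ell) (e : gedge) : Prop :=
  if horiz e then gy e = cy L /\ xlo L <= gx e < xhi L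
  else gx e = cx L /\ ylo L <= gy e < yhi L.

Definition traces (s : list gedge) (L : ell) : Prop :=
  ell_wf L /\ forall e, In e s <-> ell_edge L e.

Definition bent (L : ell) : Prop := xlo L < xhi L /\ ylo L < yhi L.

Ltac ell_simpl :=
  cbn [In ell_edge ell_wf bent corner leave horiz gx gy cx cy xlo xhi ylo yhi fst snd] in *.

Definition arm_end (L : ell) (q : point) : Prop :=
  snd q = cy L /\ fst q <> cx L /\ (fst q = xlo L \/ fst q = xhi L) \/
  fst q = cx L /\ snd q <> cy L /\ (snd q = ylo L \/ snd q = yhi L).

Definition free_end (s : list gedge) (q : point) : Prop :=
  match s with
  | [] => False
  | h :: t => on_edge q h /\ forall f, In f t -> ~ on_edge q f
  end.

Lemma ell_of_edge e q : on_edge q e -> exists L, traces [e] L /\ arm_end L q.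
Proof.
  rewrite on_edge_iff; destruct q as [u v], e as [x y []]; ell_simpl; intros Hq.
  (* [2 * x + 1 - u] is the endpoint of the edge other than [u]. *)
  - exists (Ell (2 * x + 1 - u) y x (x + 1) y y); split; [split|].
    + unfold ell_wf; ell_simpl; lia.
    + intros [a b []]; ell_simpl; rewrite gedge_eq_iff; ell_simpl; split; lia.
    + unfold arm_end; ell_simpl; lia.
  - exists (Ell x (2 * y + 1 - v) x x y (y + 1)); split; [split|].
    + unfold ell_wf; ell_simpl; lia.
    + intros [a b []]; ell_simpl; rewrite gedge_eq_iff; ell_simpl; split; lia.
    + unfold arm_end; ell_simpl; lia.
Qed.

Definition neighbor (p : point) (d : dir) : point :=
  match d with
  | Up => (fst p, snd p + 1)
  | Down => (fst p, snd p - 1)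
  | Left => (fst p - 1, snd p)
  | Right => (fst p + 1, snd p)
  end.

Lemma edge_of_endpoints w z e :
  on_edge w e -> on_edge z e -> z <> w -> exists d, e = leave w d /\ z = neighbor w d.
Proof.
  rewrite !on_edge_iff; destruct w as [wx wy], z as [zx zy], e as [x y []]; cbn;
    rewrite (@pair_equal_spec Z Z); intros Hw Hz Hzw.
  - destruct (Z.eq_dec wx x); [exists Right | exists Left]; cbn;
      split; f_equal; lia.
  - destruct (Z.eq_dec wy y); [exists Up | exists Down]; cbn;
      split; f_equal; lia.
Qed.

Lemma traces_cons s L e L' :
  traces s L -> ell_wf L' -> (forall f, f = e \/ ell_edge L f <-> ell_edge L' f) ->
  traces (e :: s) L'.
Proof.
  intros [_ HT] Hwf' HL'; split; [exact Hwf'|].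
  intros f; cbn [In]; rewrite <- HL', HT; intuition congruence.
Qed.

Ltac extension_ok HT :=
  split;
  [ apply (traces_cons _ _ _ _ HT);
    [ unfold ell_wf; ell_simpl; lia
    | intros [? ? []]; rewrite gedge_eq_iff; ell_simpl; split; lia ]
  | unfold arm_end; ell_simpl; lia ].

Lemma ell_extend s L h w z e :
  traces s L -> arm_end L w -> In h s -> on_edge w h ->
  on_edge w e -> on_edge z e -> z <> w -> ~ In e s ->
  (horiz e <> horiz h -> xlo L = xhi L \/ ylo L = yhi L) ->
  exists L', traces (e :: s) L' /\ arm_end L' z.
Proof.
  intros HT Hw Hh Hwh Hwe Hze Hzw He Hturn.
  destruct (edge_of_endpoints w z e Hwe Hze Hzw) as [d [-> ->]]; clear Hwe Hze Hzw.
  pose proof (proj1 HT) as Hwf; rewrite (proj2 HT) in Hh, He.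
  destruct w as [wx wy]; rewrite on_edge_iff in Hwh; unfold ell_wf, arm_end in *; ell_simpl.
  assert (Hhead : horiz h = true /\ wy = cy L /\ wx <> cx L /\ (wx = xlo L \/ wx = xhi L) \/
                  horiz h = false /\ wx = cx L /\ wy <> cy L /\ (wy = ylo L \/ wy = yhi L)).
  { destruct h as [? ? []]; ell_simpl; lia. }
  clear Hw Hh Hwh.
  (* First four cases: w ends the horizontal arm and e turns there (Up, Down) or prolongs the
     arm (Left, Right).  Last four: the same at the end of the vertical arm. *)
  destruct Hhead as [(Hh & Hw) | (Hh & Hw)], d; rewrite Hh in Hturn; clear Hh;
    cbn [leave neighbor horiz fst snd] in *;
    try specialize (Hturn ltac:(discriminate)); ell_simpl.
  - exists (Ell wx (cy L) (xlo L) (xhi L) (cy L) (cy L + 1)); extension_ok HT.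
  - exists (Ell wx (cy L) (xlo L) (xhi L) (cy L - 1) (cy L)); extension_ok HT.
  - exists (Ell (cx L) (cy L) (xlo L - 1) (xhi L) (ylo L) (yhi L)); extension_ok HT.
  - exists (Ell (cx L) (cy L) (xlo L) (xhi L + 1) (ylo L) (yhi L)); extension_ok HT.
  - exists (Ell (cx L) (cy L) (xlo L) (xhi L) (ylo L) (yhi L + 1)); extension_ok HT.
  - exists (Ell (cx L) (cy L) (xlo L) (xhi L) (ylo L - 1) (yhi L)); extension_ok HT.
  - exists (Ell (cx L) wy (cx L - 1) (cx L) (ylo L) (yhi L)); extension_ok HT.
  - exists (Ell (cx L) wy (cx L) (cx L + 1) (ylo L) (yhi L)); extension_ok HT.
Qed.

Lemma is_path_cons e s : is_path (e :: s) -> is_path s.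
Proof.
  intros (Hnd & Hc & Hn); split; [|split].
  - inversion Hnd; assumption.
  - intros i Hi; apply (Hc (S i)); cbn; lia.
  - intros i j Hij Hj; apply (Hn (S i) (S j)); cbn; lia.
Qed.

Lemma at_most_one_bend_cons e s : at_most_one_bend (e :: s) -> at_most_one_bend s.
Proof.
  intros Hb i j [Hi Hi'] [Hj Hj'].
  enough (S i = S j) by lia.
  apply Hb; split; cbn; auto; lia.
Qed.

Lemma is_bend_of_turn s e :
  In e s -> horiz e <> horiz (hd dummy_edge s) -> exists i, is_bend s i.
Proof.
  induction s as [|g s IH]; [intros []|].
  intros [<-|He] Hturn; [destruct (Hturn eq_refl)|].
  destruct s as [|g' s]; [destruct He|].
  destruct (Bool.bool_dec (horiz g) (horiz g')) as [Hgg|Hgg].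
  - destruct (IH He) as [i [Hi Hi']]; [cbn in *; congruence|].
    exists (S i); split; cbn in *; [lia|exact Hi'].
  - exists 0%nat; split; cbn; [lia|exact Hgg].
Qed.

Lemma traces_bent_is_bend s L : traces s L -> bent L -> exists i, is_bend s i.
Proof.
  intros [Hwf HT] Hb; unfold ell_wf, bent in *.
  assert (Hhor : In (GE (xlo L) (cy L) true) s) by (apply HT; ell_simpl; lia).
  assert (Hver : In (GE (cx L) (ylo L) false) s) by (apply HT; ell_simpl; lia).
  destruct (horiz (hd dummy_edge s)) eqn:Hd.
  - apply (is_bend_of_turn s _ Hver); rewrite Hd; discriminate.
  - apply (is_bend_of_turn s _ Hhor); rewrite Hd; discriminate.
Qed.

Lemma path_head_avoids_tail e h t p f :
  is_path (e :: h :: t) -> In f t -> on_edge p e -> ~ on_edge p f.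
Proof.
  intros (_ & _ & Hn) Hf Hpe Hpf.
  destruct (In_nth t f dummy_edge Hf) as [k [Hk <-]].
  apply (Hn 0%nat (S (S k))) with p; cbn; [lia|lia|auto].
Qed.

Lemma one_bend_path_arm_end s q :
  is_path s -> at_most_one_bend s -> free_end s q -> exists L, traces s L /\ arm_end L q.
Proof.
  revert q; induction s as [|e s IH]; intros q Hp Hb Hq; [destruct Hq|].
  destruct s as [|h t]; [apply ell_of_edge, Hq|].
  destruct Hq as [Hqe Hqs].
  destruct (proj1 (proj2 Hp) 0%nat) as [w [[Hwe Hwh] _]]; [cbn; lia|].
  assert (Hw : free_end (h :: t) w).
  { split; [exact Hwh|]. intros f Hf; exact (path_head_avoids_tail e h t w f Hp Hf Hwe). }
  destruct (IH w (is_path_cons _ _ Hp) (at_most_one_bend_cons _ _ Hb) Hw) as [L [HT HL]].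
  apply (ell_extend (h :: t) L h w q e HT HL (or_introl eq_refl) Hwh Hwe Hqe).
  - intros ->; exact (Hqs h (or_introl eq_refl) Hwh).
  - intros He; exact (Hqs e He Hqe).
  - (* Turning at e would be a second bend. *)
    intros Hturn.
    destruct (Z.eq_dec (xlo L) (xhi L)) as [|Hx]; [left; assumption|].
    destruct (Z.eq_dec (ylo L) (yhi L)) as [|Hy]; [right; assumption|].
    destruct (traces_bent_is_bend _ _ HT) as [i [Hi Hi']];
      [destruct HT as [Hwf _]; unfold ell_wf, bent in *; lia|].
    enough (0%nat = S i) by lia.
    apply Hb; split; cbn in *; auto; lia.
Qed.

Lemma path_free_end e s : is_path (e :: s) -> exists q, free_end (e :: s) q.
Proof.
  intros Hp.
  destruct s as [|h t]; [exists (src e); split; [left; reflexivity|intros _ []]|].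
  destruct (proj1 (proj2 Hp) 0%nat) as [w [[Hwe Hwh] Hw]]; [cbn; lia|].
  cbn [edge_at nth] in Hwe, Hwh, Hw.
  assert (Hq : exists q, on_edge q e /\ q <> w).
  { rewrite on_edge_iff in Hwe; destruct w as [wx wy], e as [x y []]; ell_simpl.
    - exists (2 * x + 1 - wx, y); rewrite on_edge_iff, (@pair_equal_spec Z Z); ell_simpl; lia.
    - exists (x, 2 * y + 1 - wy); rewrite on_edge_iff, (@pair_equal_spec Z Z); ell_simpl; lia. }
  destruct Hq as [q [Hqe Hqw]].
  exists q; split; [exact Hqe|].
  intros f [<-|Hf] Hqf.
  - exact (Hqw (eq_sym (Hw q (conj Hqe Hqf)))).
  - exact (path_head_avoids_tail e h t q f Hp Hf Hqe Hqf).
Qed.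

Lemma one_bend_path_traces s : is_path s -> at_most_one_bend s -> exists L, traces s L.
Proof.
  intros Hp Hb.
  destruct s as [|e s].
  - exists (Ell 0 0 0 0 0 0); split; [unfold ell_wf; ell_simpl; lia|].
    intros [? ? []]; ell_simpl; lia.
  - destruct (path_free_end e s Hp) as [q Hq].
    destruct (one_bend_path_arm_end _ q Hp Hb Hq) as [L [HT _]].
    exists L; exact HT.
Qed.

(** * Edge-sharing L-shapes *)

Definition ell_share (L M : ell) : Prop := exists e, ell_edge L e /\ ell_edge M e.

Lemma share_edge_traces s t L M :
  traces s L -> traces t M -> (share_edge s t <-> ell_share L M).
Proof.
  intros [_ HL] [_ HM]; unfold share_edge, ell_share.
  split; intros [e He]; exists e; rewrite HL, HM in *; exact He.
Qed.

Definition hoverlap (L M : ell) : Prop :=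
  cy L = cy M /\ xlo L < xhi M /\ xlo M < xhi L /\ xlo L < xhi L /\ xlo M < xhi M.

Definition voverlap (L M : ell) : Prop :=
  cx L = cx M /\ ylo L < yhi M /\ ylo M < yhi L /\ ylo L < yhi L /\ ylo M < yhi M.

Lemma ell_share_iff L M : ell_share L M <-> hoverlap L M \/ voverlap L M.
Proof.
  unfold ell_share, hoverlap, voverlap; split.
  - intros [[x y []] He]; ell_simpl; lia.
  - intros [H | H].
    + exists (GE (Z.max (xlo L) (xlo M)) (cy L) true); ell_simpl; lia.
    + exists (GE (cx L) (Z.max (ylo L) (ylo M)) false); ell_simpl; lia.
Qed.

Lemma ell_share_sym L M : ell_share L M -> ell_share M L.
Proof. intros [e [HL HM]]; exists e; split; assumption. Qed.

Lemma hoverlap_sym L M : hoverlap L M -> hoverlap M L.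
Proof. unfold hoverlap; lia. Qed.

Lemma voverlap_sym L M : voverlap L M -> voverlap M L.
Proof. unfold voverlap; lia. Qed.

Lemma hdisjoint_apart L M :
  ~ ell_share L M -> cy L = cy M -> xlo L < xhi L -> xlo M < xhi M ->
  xhi L <= xlo M \/ xhi M <= xlo L.
Proof. rewrite ell_share_iff; unfold hoverlap, voverlap; lia. Qed.

Lemma vdisjoint_apart L M :
  ~ ell_share L M -> cx L = cx M -> ylo L < yhi L -> ylo M < yhi M ->
  yhi L <= ylo M \/ yhi M <= ylo L.
Proof. rewrite ell_share_iff; unfold hoverlap, voverlap; lia. Qed.

(** * L-shapes representing K_{2,4} *)

Definition share_dir (b : bool) (L M : ell) : Prop :=
  if b then hoverlap L M else voverlap L M.

Definition meets (A1 A2 : ell) (t : bool * bool) (V : ell) : Prop :=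
  share_dir (fst t) V A1 /\ share_dir (snd t) V A2.

Lemma meets_of_share A1 A2 V :
  ell_share V A1 -> ell_share V A2 -> exists t, meets A1 A2 t V.
Proof.
  rewrite !ell_share_iff; intros [H1 | H1] [H2 | H2];
    [exists (true, true) | exists (true, false) | exists (false, true) | exists (false, false)];
    split; assumption.
Qed.

Definition mixed (t : bool * bool) : bool := xorb (fst t) (snd t).

Definition compatible (t u : bool * bool) : bool :=
  if mixed t then mixed u else negb (mixed u) && xorb (fst t) (fst u).

Lemma meets_swap A1 A2 t V : meets A1 A2 t V -> meets A2 A1 (snd t, fst t) V.
Proof. intros [H1 H2]; split; assumption. Qed.

Lemma pure_pair_share A1 A2 V W b :
  ~ ell_share A1 A2 -> meets A1 A2 (b, b) V -> meets A1 A2 (b, b) W -> ell_share V W.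
Proof.
  intros NA [HV1 HV2] [HW1 HW2]; apply ell_share_iff.
  destruct b; cbn in *; unfold hoverlap, voverlap in *.
  - pose proof (hdisjoint_apart A1 A2 NA ltac:(lia) ltac:(lia) ltac:(lia)); left; lia.
  - pose proof (vdisjoint_apart A1 A2 NA ltac:(lia) ltac:(lia) ltac:(lia)); right; lia.
Qed.

Lemma pure_mixed_share A1 A2 V W b :
  ell_wf A2 -> ell_wf W -> ~ ell_share A1 A2 ->
  meets A1 A2 (b, b) V -> meets A1 A2 (b, negb b) W -> ell_share V W.
Proof.
  intros wA2 wW NA [HV1 HV2] [HW1 HW2]; apply ell_share_iff.
  destruct b; cbn in *; unfold ell_wf, hoverlap, voverlap in *.
  - pose proof (hdisjoint_apart A1 A2 NA ltac:(lia) ltac:(lia) ltac:(lia)); left; lia.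
  - pose proof (vdisjoint_apart A1 A2 NA ltac:(lia) ltac:(lia) ltac:(lia)); right; lia.
Qed.

Lemma compatible_of_disjoint A1 A2 V W t u :
  ell_wf A1 -> ell_wf A2 -> ell_wf V -> ell_wf W -> ~ ell_share A1 A2 ->
  meets A1 A2 t V -> meets A1 A2 u W -> ~ ell_share V W -> compatible t u = true.
Proof.
  intros wA1 wA2 wV wW NA HV HW NVW.
  pose proof (meets_swap _ _ _ _ HV) as HV'.
  pose proof (meets_swap _ _ _ _ HW) as HW'.
  assert (NA' : ~ ell_share A2 A1) by (intros H; apply NA, ell_share_sym, H).
  destruct t as [[] []], u as [[] []]; cbn in *; try reflexivity; exfalso; apply NVW;
    first [ exact (pure_pair_share _ _ _ _ _ NA HV HW)
          | exact (pure_mixed_share _ _ _ _ _ wA2 wW NA HV HW)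
          | exact (pure_mixed_share _ _ _ _ _ wA1 wW NA' HV' HW')
          | apply ell_share_sym;
            first [ exact (pure_mixed_share _ _ _ _ _ wA2 wV NA HW HV)
                  | exact (pure_mixed_share _ _ _ _ _ wA1 wV NA' HW' HV') ] ].
Qed.

Definition corner_covered (A1 A2 V : ell) : Prop :=
  forall d, ell_edge A1 (leave (corner V) d) \/ ell_edge A2 (leave (corner V) d).

Lemma mixed_pair_covered A1 A2 V W t :
  ell_wf V -> ell_wf W -> mixed t = true ->
  meets A1 A2 t V -> meets A1 A2 t W -> ~ ell_share V W -> bent V /\ corner_covered A1 A2 V.
Proof.
  intros wV wW Ht [HV1 HV2] [HW1 HW2] N.
  destruct t as [[] []]; cbn in *; try discriminate;
    unfold ell_wf, hoverlap, voverlap, corner_covered, bent in *;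
    pose proof (hdisjoint_apart V W N ltac:(lia) ltac:(lia) ltac:(lia));
    pose proof (vdisjoint_apart V W N ltac:(lia) ltac:(lia) ltac:(lia));
    clear N; (split; [lia|]); intros []; ell_simpl; lia.
Qed.

Lemma no_three_mixed A1 A2 U V W t :
  ell_wf U -> ell_wf V -> ell_wf W -> mixed t = true ->
  meets A1 A2 t U -> meets A1 A2 t V -> meets A1 A2 t W ->
  ~ ell_share U V -> ~ ell_share U W -> ~ ell_share V W -> False.
Proof.
  intros wU wV wW Ht [HU1 HU2] [HV1 HV2] [HW1 HW2] NUV NUW NVW.
  destruct t as [[] []]; cbn in *; try discriminate;
    unfold ell_wf, hoverlap, voverlap in *;
    pose proof (hdisjoint_apart U V NUV ltac:(lia) ltac:(lia) ltac:(lia));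
    pose proof (hdisjoint_apart U W NUW ltac:(lia) ltac:(lia) ltac:(lia));
    pose proof (hdisjoint_apart V W NVW ltac:(lia) ltac:(lia) ltac:(lia));
    clear NUV NUW NVW; lia.
Qed.

Lemma K24_type_pattern t1 t2 t3 t4 :
  compatible t1 t2 = true -> compatible t1 t3 = true -> compatible t1 t4 = true ->
  compatible t2 t3 = true -> compatible t2 t4 = true -> compatible t3 t4 = true ->
  mixed t1 = true /\ (t2 = t1 \/ t3 = t1 \/ t4 = t1 \/ mixed t2 = true /\ t3 = t2 /\ t4 = t2).
Proof.
  destruct t1 as [[] []], t2 as [[] []], t3 as [[] []], t4 as [[] []]; cbn;
    intros; try discriminate; intuition congruence.
Qed.

Lemma K24_corner_covered A1 A2 V1 V2 V3 V4 :
  Forall ell_wf [A1; A2; V1; V2; V3; V4] -> ~ ell_share A1 A2 ->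
  Forall (fun V => ell_share V A1 /\ ell_share V A2) [V1; V2; V3; V4] ->
  ~ ell_share V1 V2 -> ~ ell_share V1 V3 -> ~ ell_share V1 V4 ->
  ~ ell_share V2 V3 -> ~ ell_share V2 V4 -> ~ ell_share V3 V4 ->
  bent V1 /\ corner_covered A1 A2 V1.
Proof.
  rewrite !Forall_forall; intros Hwf NA Hsh N12 N13 N14 N23 N24 N34.
  assert (Ht : forall V, In V [V1; V2; V3; V4] -> exists t, meets A1 A2 t V)
    by (intros V HV; destruct (Hsh V HV); apply meets_of_share; assumption).
  destruct (Ht V1 ltac:(cbn; tauto)) as [t1 T1], (Ht V2 ltac:(cbn; tauto)) as [t2 T2],
    (Ht V3 ltac:(cbn; tauto)) as [t3 T3], (Ht V4 ltac:(cbn; tauto)) as [t4 T4].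
  pose proof (Hwf A1 ltac:(cbn; tauto)) as wA1; pose proof (Hwf A2 ltac:(cbn; tauto)) as wA2.
  pose proof (Hwf V1 ltac:(cbn; tauto)) as w1; pose proof (Hwf V2 ltac:(cbn; tauto)) as w2.
  pose proof (Hwf V3 ltac:(cbn; tauto)) as w3; pose proof (Hwf V4 ltac:(cbn; tauto)) as w4.
  pose proof (fun V W t u => compatible_of_disjoint A1 A2 V W t u wA1 wA2) as C.
  destruct (K24_type_pattern t1 t2 t3 t4
              (C _ _ _ _ w1 w2 NA T1 T2 N12) (C _ _ _ _ w1 w3 NA T1 T3 N13)
              (C _ _ _ _ w1 w4 NA T1 T4 N14) (C _ _ _ _ w2 w3 NA T2 T3 N23)
              (C _ _ _ _ w2 w4 NA T2 T4 N24) (C _ _ _ _ w3 w4 NA T3 T4 N34))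
    as [Hm [-> | [-> | [-> | (Hm2 & -> & ->)]]]].
  - exact (mixed_pair_covered _ _ _ _ _ w1 w2 Hm T1 T2 N12).
  - exact (mixed_pair_covered _ _ _ _ _ w1 w3 Hm T1 T3 N13).
  - exact (mixed_pair_covered _ _ _ _ _ w1 w4 Hm T1 T4 N14).
  - destruct (no_three_mixed _ _ _ _ _ _ w2 w3 w4 Hm2 T2 T3 T4 N23 N24 N34).
Qed.

(** * L-shapes representing C_4 *)

Definition avoids_corner (M L : ell) : Prop := forall d, ~ ell_edge M (leave (corner L) d).

Lemma avoids_corner_row M L :
  avoids_corner M L -> cy M = cy L -> xlo M < xhi M -> cx L < xlo M \/ xhi M < cx L.
Proof.
  intros H Hy Hx; pose proof (H Left); pose proof (H Right); ell_simpl; lia.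
Qed.

Lemma avoids_corner_column M L :
  avoids_corner M L -> cx M = cx L -> ylo M < yhi M -> cy L < ylo M \/ yhi M < cy L.
Proof.
  intros H Hx Hy; pose proof (H Down); pose proof (H Up); ell_simpl; lia.
Qed.

Lemma hoverlap_facing P Q :
  ell_wf P -> ell_wf Q -> bent P -> bent Q ->
  avoids_corner P Q -> avoids_corner Q P -> hoverlap P Q ->
  cx P < cx Q /\ xlo P = cx P /\ xhi Q = cx Q \/ cx Q < cx P /\ xhi P = cx P /\ xlo Q = cx Q.
Proof.
  intros (wP & _ & wP' & _) (wQ & _ & wQ' & _) [bP _] [bQ _] aPQ aQP H.
  pose proof (avoids_corner_row P Q aPQ ltac:(apply H) bP).
  pose proof (avoids_corner_row Q P aQP ltac:(symmetry; apply H) bQ).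
  unfold hoverlap in H; lia.
Qed.

Lemma voverlap_facing P Q :
  ell_wf P -> ell_wf Q -> bent P -> bent Q ->
  avoids_corner P Q -> avoids_corner Q P -> voverlap P Q ->
  cy P < cy Q /\ ylo P = cy P /\ yhi Q = cy Q \/ cy Q < cy P /\ yhi P = cy P /\ ylo Q = cy Q.
Proof.
  intros (_ & wP & _ & wP') (_ & wQ & _ & wQ') [_ bP] [_ bQ] aPQ aQP H.
  pose proof (avoids_corner_column P Q aPQ ltac:(apply H) bP).
  pose proof (avoids_corner_column Q P aQP ltac:(symmetry; apply H) bQ).
  unfold voverlap in H; lia.
Qed.

Lemma hoverlap_both_sides P Q R :
  ell_wf P -> ell_wf Q -> ell_wf R -> bent P -> bent Q -> bent R ->
  avoids_corner P Q -> avoids_corner Q P -> avoids_corner P R -> avoids_corner R P ->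
  hoverlap P Q -> hoverlap P R -> ~ ell_share Q R -> False.
Proof.
  intros wP wQ wR bP bQ bR aPQ aQP aPR aRP HQ HR N.
  pose proof (hoverlap_facing P Q wP wQ bP bQ aPQ aQP HQ).
  pose proof (hoverlap_facing P R wP wR bP bR aPR aRP HR).
  pose proof (avoids_corner_row P Q aPQ ltac:(apply HQ) (proj1 bP)).
  pose proof (avoids_corner_row P R aPR ltac:(apply HR) (proj1 bP)).
  unfold hoverlap in *.
  pose proof (hdisjoint_apart Q R N ltac:(lia) ltac:(lia) ltac:(lia)).
  clear N; lia.
Qed.

Lemma voverlap_both_sides P Q R :
  ell_wf P -> ell_wf Q -> ell_wf R -> bent P -> bent Q -> bent R ->
  avoids_corner P Q -> avoids_corner Q P -> avoids_corner P R -> avoids_corner R P ->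
  voverlap P Q -> voverlap P R -> ~ ell_share Q R -> False.
Proof.
  intros wP wQ wR bP bQ bR aPQ aQP aPR aRP HQ HR N.
  pose proof (voverlap_facing P Q wP wQ bP bQ aPQ aQP HQ).
  pose proof (voverlap_facing P R wP wR bP bR aPR aRP HR).
  pose proof (avoids_corner_column P Q aPQ ltac:(apply HQ) (proj2 bP)).
  pose proof (avoids_corner_column P R aPR ltac:(apply HR) (proj2 bP)).
  unfold voverlap in *.
  pose proof (vdisjoint_apart Q R N ltac:(lia) ltac:(lia) ltac:(lia)).
  clear N; lia.
Qed.

Definition C4_config (L : idx4 -> ell) : Prop :=
  forall i, ell_wf (L i) /\ bent (L i) /\
    avoids_corner (L i) (L (next4 i)) /\ avoids_corner (L (next4 i)) (L i) /\
    ell_share (L i) (L (next4 i)) /\ ~ ell_share (L i) (L (next4 (next4 i))).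

Lemma C4_alternate L i : C4_config L ->
  (hoverlap (L i) (L (next4 i)) -> voverlap (L (next4 i)) (L (next4 (next4 i)))) /\
  (voverlap (L i) (L (next4 i)) -> hoverlap (L (next4 i)) (L (next4 (next4 i)))).
Proof.
  intros HC.
  destruct (HC i) as (wi & bi & aij & aji & _ & N).
  destruct (HC (next4 i)) as (wj & bj & ajk & akj & Sjk & _).
  destruct (HC (next4 (next4 i))) as (wk & bk & _).
  apply ell_share_iff in Sjk.
  split; intros H; destruct Sjk as [Sjk | Sjk]; try assumption; exfalso.
  - exact (hoverlap_both_sides _ _ _ wj wi wk bj bi bk aji aij ajk akj (hoverlap_sym _ _ H) Sjk N).
  - exact (voverlap_both_sides _ _ _ wj wi wk bj bi bk aji aij ajk akj (voverlap_sym _ _ H) Sjk N).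
Qed.

Definition distinct4 (a b c d : idx4) : Prop :=
  a <> b /\ a <> c /\ a <> d /\ b <> c /\ b <> d /\ c <> d.

Definition arm (L : ell) (d : dir) : Prop := ell_edge L (leave (corner L) d).

Definition ell_square_frame (L1 L2 L3 L4 : ell) : Prop :=
  exists x1 x2 y1 y2, x1 < x2 /\ y1 < y2 /\
    corner L1 = (x1, y1) /\ corner L2 = (x2, y1) /\ corner L3 = (x1, y2) /\ corner L4 = (x2, y2) /\
    arm L1 Up /\ arm L1 Right /\ arm L2 Up /\ arm L2 Left /\
    arm L3 Down /\ arm L3 Right /\ arm L4 Down /\ arm L4 Left /\
    ell_share L1 L2 /\ ell_share L1 L3 /\ ell_share L2 L4 /\ ell_share L3 L4 /\
    ~ ell_share L1 L4 /\ ~ ell_share L2 L3.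

Ltac prove_ell_square_frame :=
  split; [unfold distinct4; repeat split; discriminate|];
  match goal with |- ell_square_frame ?A ?B ?C _ => exists (cx A), (cx B), (cy A), (cy C) end;
  repeat split;
  first [ lia
        | unfold corner; f_equal; lia
        | unfold arm, corner; ell_simpl; lia
        | assumption
        | apply ell_share_sym; assumption ].

Lemma C4_rectangle L : C4_config L -> hoverlap (L I1) (L I2) ->
  exists a b c d, distinct4 a b c d /\ ell_square_frame (L a) (L b) (L c) (L d).
Proof.
  intros HC H12.
  pose proof (proj1 (C4_alternate L I1 HC) H12) as V23; cbn [next4] in V23.
  pose proof (proj2 (C4_alternate L I2 HC) V23) as H34; cbn [next4] in H34.
  pose proof (proj1 (C4_alternate L I3 HC) H34) as V41; cbn [next4] in V41.
  destruct (HC I1) as (w1 & b1 & a12 & a21 & S12 & N13),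
    (HC I2) as (w2 & b2 & a23 & a32 & S23 & N24),
    (HC I3) as (w3 & b3 & a34 & a43 & S34 & N31), (HC I4) as (w4 & b4 & a41 & a14 & S41 & N42).
  cbn [next4] in *.
  pose proof (hoverlap_facing _ _ w1 w2 b1 b2 a12 a21 H12) as F12.
  pose proof (voverlap_facing _ _ w2 w3 b2 b3 a23 a32 V23) as F23.
  pose proof (hoverlap_facing _ _ w3 w4 b3 b4 a34 a43 H34) as F34.
  pose proof (voverlap_facing _ _ w4 w1 b4 b1 a41 a14 V41) as F41.
  unfold hoverlap, voverlap, bent in *.
  destruct F12 as [F12|F12], F23 as [F23|F23], F34 as [F34|F34], F41 as [F41|F41];
    try (exfalso; lia).
  - exists I1, I2, I4, I3; prove_ell_square_frame.
  - exists I4, I3, I1, I2; prove_ell_square_frame.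
  - exists I2, I1, I3, I4; prove_ell_square_frame.
  - exists I3, I4, I2, I1; prove_ell_square_frame.
Qed.

Lemma next4_inj i j : next4 i = next4 j -> i = j.
Proof. destruct i, j; cbn; congruence. Qed.

Lemma C4_square_frame L : C4_config L ->
  exists a b c d, distinct4 a b c d /\ ell_square_frame (L a) (L b) (L c) (L d).
Proof.
  intros HC.
  destruct (HC I1) as (_ & _ & _ & _ & S12 & _).
  apply ell_share_iff in S12; destruct S12 as [H12 | V12]; [exact (C4_rectangle L HC H12)|].
  assert (HC' : C4_config (fun i => L (next4 i))) by (intros i; exact (HC (next4 i))).
  destruct (C4_rectangle _ HC' (proj2 (C4_alternate L I1 HC) V12)) as (a & b & c & d & Hd & F).
  exists (next4 a), (next4 b), (next4 c), (next4 d); split; [|exact F].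
  unfold distinct4 in *; repeat split; intros E; apply next4_inj in E; tauto.
Qed.

(** * From L-shapes to square-frames *)

Lemma bend_at_point s p d1 d2 :
  is_path s -> In (leave p d1) s -> In (leave p d2) s ->
  horiz (leave p d1) <> horiz (leave p d2) -> bend_with_shape s p d1 d2.
Proof.
  intros (_ & _ & Hn) H1 H2 Hdiff.
  destruct (In_nth s _ dummy_edge H1) as [i [Hi E1]].
  destruct (In_nth s _ dummy_edge H2) as [j [Hj E2]].
  assert (Hij : j = S i \/ i = S j).
  { destruct (Nat.lt_total i j) as [Hlt | [-> | Hlt]].
    - destruct (Nat.eq_dec j (S i)) as [|Hne]; [left; assumption|exfalso].
      apply (Hn i j ltac:(lia) Hj p); unfold edge_at; rewrite E1, E2; split; apply on_edge_leave.
    - rewrite E1 in E2; rewrite E2 in Hdiff; contradiction.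
    - destruct (Nat.eq_dec i (S j)) as [|Hne]; [right; assumption|exfalso].
      apply (Hn j i ltac:(lia) Hi p); unfold edge_at; rewrite E1, E2; split; apply on_edge_leave. }
  destruct Hij as [-> | ->]; [exists i | exists j]; unfold is_bend, edge_at; rewrite E1, E2.
  - split; [split; [lia|exact Hdiff]|left; split; reflexivity].
  - split; [split; [lia|auto]|right; split; reflexivity].
Qed.

Lemma bend_of_arms s L d1 d2 :
  is_path s -> traces s L -> arm L d1 -> arm L d2 ->
  horiz (leave (corner L) d1) <> horiz (leave (corner L) d2) ->
  bend_with_shape s (corner L) d1 d2.
Proof. intros Hp [_ HT] H1 H2; apply bend_at_point; [exact Hp | apply HT, H1 | apply HT, H2]. Qed.

Lemma square_frame_of_ells s1 s2 s3 s4 L1 L2 L3 L4 :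
  is_path s1 -> is_path s2 -> is_path s3 -> is_path s4 ->
  traces s1 L1 -> traces s2 L2 -> traces s3 L3 -> traces s4 L4 ->
  ell_square_frame L1 L2 L3 L4 -> square_frame s1 s2 s3 s4.
Proof.
  intros p1 p2 p3 p4 T1 T2 T3 T4
    (x1 & x2 & y1 & y2 & Hx & Hy & C1 & C2 & C3 & C4 & u1 & r1 & u2 & l2 & d3 & r3 & d4 & l4 & Sh).
  exists x1, x2, y1, y2; split; [exact Hx|]; split; [exact Hy|].
  rewrite <- C1, <- C2, <- C3, <- C4.
  split; [apply bend_of_arms; auto; discriminate|].
  split; [apply bend_of_arms; auto; discriminate|].
  split; [apply bend_of_arms; auto; discriminate|].
  split; [apply bend_of_arms; auto; discriminate|].
  rewrite (share_edge_traces _ _ _ _ T1 T2), (share_edge_traces _ _ _ _ T1 T3),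
    (share_edge_traces _ _ _ _ T2 T4), (share_edge_traces _ _ _ _ T3 T4),
    (share_edge_traces _ _ _ _ T1 T4), (share_edge_traces _ _ _ _ T2 T3).
  exact Sh.
Qed.

(** * The bat graph *)

Section BatRepresentation.

Variable P : batV -> list gedge.
Hypothesis HP : B1_EPG_rep_bat P.

Lemma bat_traces v : exists L, traces (P v) L.
Proof. destruct (proj1 HP v) as [Hp Hb]; exact (one_bend_path_traces _ Hp Hb). Qed.

Lemma bat_share v w L M :
  traces (P v) L -> traces (P w) M -> v <> w -> (bat_adj v w <-> ell_share L M).
Proof. intros TL TM Hvw; rewrite (proj2 HP v w Hvw); exact (share_edge_traces _ _ _ _ TL TM). Qed.

Lemma gadget_corner_covered i L :
  traces (P (U i)) L -> bent L /\
  forall d, In (leave (corner L) d) (P (A i false)) \/ In (leave (corner L) d) (P (A i true)).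
Proof.
  intros TL.
  destruct (bat_traces (A i false)) as [A1 T1], (bat_traces (A i true)) as [A2 T2],
    (bat_traces (B i J1)) as [V2 T3], (bat_traces (B i J2)) as [V3 T4],
    (bat_traces (B i J3)) as [V4 T5].
  assert (HK : bent L /\ corner_covered A1 A2 L).
  { apply (K24_corner_covered A1 A2 L V2 V3 V4);
    repeat match goal with
    | |- Forall _ _ => apply Forall_cons || apply Forall_nil
    | |- _ /\ _ => split
    | T : traces _ ?M |- ell_wf ?M => exact (proj1 T)
    | T : traces (P ?v) ?M, T' : traces (P ?w) ?N |- ell_share ?M ?N =>
        apply (bat_share v w M N T T'); [congruence | cbn; auto]
    | T : traces (P ?v) ?M, T' : traces (P ?w) ?N |- ~ ell_share ?M ?N =>
        rewrite <- (bat_share v w M N T T'); [cbn; tauto | congruence]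
    end. }
  destruct HK as [Hb Hc].
  split; [exact Hb|]; intros d.
  destruct (Hc d); [left; apply T1 | right; apply T2]; assumption.
Qed.

Lemma cycle_avoids_corner i j L M :
  i <> j -> traces (P (U i)) L -> traces (P (U j)) M -> avoids_corner M L.
Proof.
  intros Hij TL TM d Hd; apply (proj2 TM) in Hd.
  assert (Hn : forall b, ~ share_edge (P (U j)) (P (A i b))).
  { intros b Hs; apply (proj2 HP (U j) (A i b) ltac:(discriminate)) in Hs; cbn in Hs; congruence. }
  destruct (proj2 (gadget_corner_covered i L TL) d) as [Ha | Ha];
    [apply (Hn false) | apply (Hn true)]; exists (leave (corner L) d); auto.
Qed.

Lemma cycle_traces : exists L : idx4 -> ell, forall i, traces (P (U i)) (L i).
Proof.
  destruct (bat_traces (U I1)) as [L1 T1], (bat_traces (U I2)) as [L2 T2],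
    (bat_traces (U I3)) as [L3 T3], (bat_traces (U I4)) as [L4 T4].
  exists (fun i => match i with I1 => L1 | I2 => L2 | I3 => L3 | I4 => L4 end).
  intros []; assumption.
Qed.

Lemma cycle_C4_config L : (forall i, traces (P (U i)) (L i)) -> C4_config L.
Proof.
  intros HL i.
  pose proof (HL i) as Ti; pose proof (HL (next4 i)) as Tj; pose proof (HL (next4 (next4 i))) as Tk.
  assert (Hij : i <> next4 i) by (destruct i; discriminate).
  split; [exact (proj1 Ti)|].
  split; [exact (proj1 (gadget_corner_covered i _ Ti))|].
  split; [exact (cycle_avoids_corner (next4 i) i _ _ (not_eq_sym Hij) Tj Ti)|].
  split; [exact (cycle_avoids_corner i (next4 i) _ _ Hij Ti Tj)|].
  split.
  - apply (bat_share _ _ _ _ Ti Tj); [congruence | left; reflexivity].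
  - rewrite <- (bat_share _ _ _ _ Ti Tk); [|destruct i; discriminate].
    destruct i; cbn; intuition discriminate.
Qed.

End BatRepresentation.

Theorem corollary2p2 (P : batV -> list gedge) :
  B1_EPG_rep_bat P ->
  exists a b c d : idx4,
    a <> b /\ a <> c /\ a <> d /\ b <> c /\ b <> d /\ c <> d /\
    square_frame (P (U a)) (P (U b)) (P (U c)) (P (U d)).
Proof.
  intros HP.
  destruct (cycle_traces P HP) as [L HL].
  destruct (C4_square_frame L (cycle_C4_config P HP L HL)) as (a & b & c & d & Hd & F).
  exists a, b, c, d.
  destruct Hd as (Hab & Hac & Had & Hbc & Hbd & Hcd); repeat (split; [assumption|]).
  apply (square_frame_of_ells _ _ _ _ (L a) (L b) (L c) (L d)); auto; apply HP.
Qed.
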